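(* Let $F$ be a field of characteristic $2$ and let $a,b\in F$ with $[F^2(a,b):F^2]=4$. Let $\beta=\langle a+1,a,b,ab\rangle_b$ be the diagonal bilinear form. Then $\beta$ is anisotropic, $G_F(q_\beta)=F^2(a,b)^*$, and $G_F(\beta)=F^2(a)^*$. In particular, $G_F(\beta)\subsetneq G_F(q_\beta)$.
   Context: $\langle c_1,\dots,c_n\rangle_b$ denotes the diagonal bilinear form $\sum c_ix_iy_i$. For a bilinear form $\beta$ on $V$, $q_\beta$ is the totally singular quadratic form $x\mapsto\beta(x,x)$. For a bilinear or quadratic form $\psi$, $G_F(\psi)=\{c\in F^*:\psi\cong c\psi\}$ is its group of similarity factors. *)

From HB Require Import structures.
From mathcomp Require Import all_boot all_order all_algebra.
Set Implicit Arguments. Unset Strict Implicit. Unset Printing Implicit Defensive.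
Import Order.TTheory GRing.Theory Num.Theory.
Local Open Scope ring_scope.

Section Defs.
Variable F : fieldType.

Definition is_subfield (P : F -> Prop) : Prop :=
  [/\ P 0, P 1,
      (forall x y, P x -> P y -> P (x - y)),
      (forall x y, P x -> P y -> P (x * y)) &
      (forall x, P x -> x != 0 -> P x^-1)].

Definition gen_field (S : F -> Prop) (x : F) : Prop :=
  forall P : F -> Prop, is_subfield P -> (forall y, S y -> P y) -> P x.

Definition Fsq (x : F) : Prop := exists y : F, x = y ^+ 2.

Definition Fsq_adj1 (a : F) : F -> Prop :=
  gen_field (fun y => Fsq y \/ y = a).
Definition Fsq_adj2 (a b : F) : F -> Prop :=
  gen_field (fun y => [\/ Fsq y, y = a | y = b]).

Definition ext_degree (K L : F -> Prop) (n : nat) : Prop :=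
  (forall x, K x -> L x) /\
  exists e : 'I_n -> F, (forall i, L (e i)) /\
    forall x, L x ->
      exists! lam : {ffun 'I_n -> F},
        (forall i, K (lam i)) /\ x = \sum_(i < n) lam i * e i.

Definition bform (n : nat) (B : 'M[F]_n) (x y : 'rV[F]_n) : F :=
  (x *m B *m y^T) 0 0.

Definition diag_bform (n : nat) (c : 'I_n -> F) : 'M[F]_n :=
  diag_mx (\row_i c i).

Definition bform_anisotropic (n : nat) (B : 'M[F]_n) : Prop :=
  forall x : 'rV[F]_n, x != 0 -> bform B x x != 0.

Definition bform_iso (n : nat) (B1 B2 : 'M[F]_n) : Prop :=
  exists M : 'M[F]_n, M \in unitmx /\
    forall x y : 'rV[F]_n, bform B2 x y = bform B1 (x *m M) (y *m M).

Definition qform_iso (n : nat) (q1 q2 : 'rV[F]_n -> F) : Prop :=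
  exists M : 'M[F]_n, M \in unitmx /\
    forall x : 'rV[F]_n, q2 x = q1 (x *m M).

Definition q_of (n : nat) (B : 'M[F]_n) : 'rV[F]_n -> F := fun x => bform B x x.

Definition G_bform (n : nat) (B : 'M[F]_n) (c : F) : Prop :=
  c != 0 /\ bform_iso B (c *: B).
Definition G_qform (n : nat) (q : 'rV[F]_n -> F) (c : F) : Prop :=
  c != 0 /\ qform_iso q (fun x => c * q x).

End Defs.

From HB Require Import structures.
From mathcomp Require Import all_boot all_order all_algebra.
From mathcomp Require Import ring.
Import GRing.Theory.
Set Implicit Arguments. Unset Strict Implicit.
Local Open Scope ring_scope.

(* Let pf t = t0^2 + a t1^2 + b t2^2 + ab t3^2 be the Pfister form <<a, b>>.
   1. The values of pf form exactly the field F^2(a,b): closure under products is the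
      characteristic-2 composition law pf (s *m pf_mul t) = pf t * pf s.  As 1, a, b, ab
      then span the 4-dimensional F^2-space F^2(a,b), they are free over F^2
      (general lemma [ext_degree_spanning_free]); hence pf is anisotropic, and, being
      additive in characteristic 2, injective.
   2. With the involution Phi : x |-> (x0, x0 + x1, x2, x3) one has q_beta x = pf (x Phi).
      So beta is anisotropic, sim t := Phi (pf_mul t) Phi is a similarity of q_beta with
      factor pf t, and by injectivity of pf it is the only one.
   3. sim t pairs e2 with e3 to a b^2 (t2^2 + a t3^2), and it is a similarity of beta
      itself when t2 = t3 = 0.
   Hence G(q_beta) = F^2(a,b)^*, while a similarity of beta (which is sim t) forces
   t2 = t3 = 0, i.e. G(beta) = F^2(a)^*.  The factor b separates the two groups. *)

Section Coordinates4.
Variable R : pzRingType.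

Definition o0 : 'I_4 := @Ordinal 4 0 erefl.
Definition o1 : 'I_4 := @Ordinal 4 1 erefl.
Definition o2 : 'I_4 := @Ordinal 4 2 erefl.
Definition o3 : 'I_4 := @Ordinal 4 3 erefl.

Lemma sum4 (g : 'I_4 -> R) : \sum_(i < 4) g i = g o0 + g o1 + g o2 + g o3.
Proof.
rewrite !big_ord_recl big_ord0 addr0 !addrA.
by congr (g _ + g _ + g _ + g _); apply: val_inj.
Qed.

Lemma ord4P (j : 'I_4) : [\/ j = o0, j = o1, j = o2 | j = o3].
Proof.
by case: j => [[|[|[|[|//]]]] Hj]; [apply: Or41 | apply: Or42 | apply: Or43 | apply: Or44];
  apply: val_inj.
Qed.

Definition mkrow (x0 x1 x2 x3 : R) : 'rV[R]_4 := \row_(j < 4) [:: x0; x1; x2; x3]`_j.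
Definition mkmx (rows : seq (seq R)) : 'M[R]_4 := \matrix_(i < 4, j < 4) (nth [::] rows i)`_j.

Lemma mulmx4E (x : 'rV[R]_4) (M : 'M[R]_4) j :
  (x *m M) 0 j = x 0 o0 * M o0 j + x 0 o1 * M o1 j + x 0 o2 * M o2 j + x 0 o3 * M o3 j.
Proof. by rewrite mxE sum4. Qed.

Lemma mkrow_eq0 (x0 x1 x2 x3 : R) :
  mkrow x0 x1 x2 x3 = 0 -> [/\ x0 = 0, x1 = 0, x2 = 0 & x3 = 0].
Proof.
move/rowP=> E; have := E o0; have := E o1; have := E o2; have := E o3.
by rewrite !mxE.
Qed.
End Coordinates4.

(* Identities in characteristic 2: X = Y follows from X + Y = 0, and every coefficient of
   X + Y that vanishes modulo 2 is an even integer, which [ring] kills when given the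
   equations 2 = 0, 4 = 0, ...  (the identities below involve no larger coefficients). *)
Section Char2.
Variables (F : fieldType) (F2 : (2 \in [pchar F])%N).

Lemma char2_natr_even k : (k.*2)%:R = 0 :> F.
Proof. by rewrite -muln2 natrM (pcharf0 F2) mulr0. Qed.

Lemma char2_eq (x y : F) : x + y = 0 -> x = y.
Proof. by move/eqP; rewrite addr_eq0 (oppr_pchar2 F2) => /eqP. Qed.
End Char2.

Ltac char2_ring F2 :=
  rewrite ?(oppr_pchar2 F2); apply: (char2_eq F2);
  ring: (char2_natr_even F2 1 : 2%:R = 0) (char2_natr_even F2 2 : 4%:R = 0)
        (char2_natr_even F2 3 : 6%:R = 0) (char2_natr_even F2 4 : 8%:R = 0).

Section Subfields.
Variable F : fieldType.

Section Closure.
Variables (P : F -> Prop) (HP : is_subfield P).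

Lemma sf0 : P 0. Proof. by case: HP. Qed.
Lemma sf1 : P 1. Proof. by case: HP. Qed.
Lemma sfB {x y} : P x -> P y -> P (x - y). Proof. by case: HP => _ _ H _ _; apply: H. Qed.
Lemma sfM {x y} : P x -> P y -> P (x * y). Proof. by case: HP => _ _ _ H _; apply: H. Qed.
Lemma sfV {x} : P x -> x != 0 -> P x^-1. Proof. by case: HP => _ _ _ _ H; apply: H. Qed.

Lemma sfD {x y} : P x -> P y -> P (x + y).
Proof. by move=> Px Py; have := sfB Px (sfB sf0 Py); rewrite sub0r opprK. Qed.

Lemma sf_sum n (g : 'I_n -> F) : (forall i, P (g i)) -> P (\sum_i g i).
Proof. by move=> Pg; apply: (big_ind P sf0) => // x y; apply: sfD. Qed.
End Closure.

Lemma gen_field_subfield (S : F -> Prop) : is_subfield (gen_field S).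
Proof.
split=> [P HP _ | P HP _ | x y Hx Hy P HP HS | x y Hx Hy P HP HS | x Hx x0 P HP HS].
- exact: sf0.
- exact: sf1.
- exact: sfB (Hx P HP HS) (Hy P HP HS).
- exact: sfM (Hx P HP HS) (Hy P HP HS).
- exact: sfV (Hx P HP HS) x0.
Qed.

Lemma gen_field_incl (S : F -> Prop) y : S y -> gen_field S y.
Proof. by move=> Sy P _ HS; apply: HS. Qed.

Lemma gen_fieldE (S P : F -> Prop) : is_subfield P ->
  (forall y, S y -> P y) -> (forall x, P x -> gen_field S x) ->
  forall x, gen_field S x <-> P x.
Proof. by move=> HP SP PS x; split=> [/(_ P HP SP) | /PS]. Qed.

Lemma gen_field_ext (S S' : F -> Prop) : (forall y, S y <-> S' y) ->
  forall x, gen_field S x <-> gen_field S' x.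
Proof.
move=> SS' x; split=> Hx P HP HS; apply: Hx HP _ => y /SS'; exact: HS.
Qed.
End Subfields.

Section SpanningFamily.
Variable F : fieldType.

Definition lcomb n (v : 'rV[F]_n) (g : 'I_n -> F) : F := \sum_j v 0 j * g j.

Lemma lcomb0 n (g : 'I_n -> F) : lcomb 0 g = 0.
Proof. by rewrite /lcomb big1 // => j _; rewrite mxE mul0r. Qed.

Lemma lcomb_delta n (g : 'I_n -> F) i : lcomb (delta_mx 0 i) g = g i.
Proof.
rewrite /lcomb (bigD1 i) //= mxE !eqxx mul1r big1 ?addr0 // => j ji.
by rewrite mxE (negbTE ji) andbF mul0r.
Qed.

Lemma lcomb_mul n (v : 'rV[F]_n) (C : 'M[F]_n) (g : 'I_n -> F) :
  lcomb v (fun j => lcomb (row j C) g) = lcomb (v *m C) g.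
Proof.
rewrite /lcomb; under eq_bigr => j _ do rewrite big_distrr /=.
rewrite exchange_big /=; apply: eq_bigr => k _.
by rewrite mxE big_distrl /=; apply: eq_bigr => j _; rewrite !mxE mulrA.
Qed.

Lemma rows_exist m n (P : 'I_m -> 'rV[F]_n -> Prop) :
  (forall i, exists v, P i v) -> exists M : 'M[F]_(m, n), forall i, P i (row i M).
Proof.
move=> /fin_all_exists [V HV]; exists (\matrix_(i, k) V i 0 k) => i.
suff -> : row i (\matrix_(i, k) V i 0 k) = V i by [].
by apply/rowP => k; rewrite !mxE.
Qed.

Variables (K L : F -> Prop) (n : nat).
Hypotheses (K_sub : is_subfield K) (L_sub : is_subfield L).

Definition Krow (v : 'rV[F]_n) : Prop := forall j, K (v 0 j).

Lemma Krow_delta i : Krow (delta_mx 0 i).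
Proof. by move=> j; rewrite mxE; case: (_ && _); [apply: sf1 | apply: sf0]. Qed.

Lemma Krow_mul (v : 'rV[F]_n) (C : 'M[F]_n) :
  Krow v -> (forall j k, K (C j k)) -> Krow (v *m C).
Proof. by move=> Kv KC k; rewrite mxE; apply: sf_sum => // j; apply: sfM. Qed.

Section Basis.
Variable e : 'I_n -> F.
Hypothesis e_in_L : forall i, L (e i).
Hypothesis e_basis : forall x, L x -> exists! lam : {ffun 'I_n -> F},
  (forall i, K (lam i)) /\ x = \sum_(i < n) lam i * e i.

Lemma coord_unique x (u v : 'rV[F]_n) : L x -> Krow u -> Krow v ->
  x = lcomb u e -> x = lcomb v e -> u = v.
Proof.
move=> Lx Ku Kv xu xv; have [lam [_ lam_uniq]] := e_basis Lx.
have coordP w : Krow w -> x = lcomb w e -> lam = [ffun i => w 0 i].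
  move=> Kw xw; apply: lam_uniq; split=> [i | ]; rewrite ?ffunE //.
  by rewrite xw; apply: eq_bigr => i _; rewrite ffunE.
apply/rowP => i; have := coordP u Ku xu; rewrite (coordP v Kv xv).
by move=> /ffunP /(_ i); rewrite !ffunE.
Qed.

Variable f : 'I_n -> F.
Hypothesis f_in_L : forall j, L (f j).
Hypothesis f_spans : forall x, L x -> exists mu, Krow mu /\ x = lcomb mu f.

(* n vectors spanning L, which has a K-basis of n elements, are K-free: the matrix C of
   their coordinates has a left inverse A (the coordinates of e in f), so lam C = 0
   forces lam = 0. *)
Lemma spanning_free lam : Krow lam -> lcomb lam f = 0 -> lam = 0.
Proof.
move=> Klam flam0.
have [C HC] : exists C : 'M_n, forall j, Krow (row j C) /\ f j = lcomb (row j C) e.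
  apply: (@rows_exist n n (fun j v => Krow v /\ f j = lcomb v e)) => j.
  have [c [[Kc fc] _]] := e_basis (f_in_L j).
  exists (\row_k c k); split=> [k | ]; rewrite ?mxE // fc.
  by apply: eq_bigr => k _; rewrite mxE.
have KC j k : K (C j k) by have [/(_ k)] := HC j; rewrite mxE.
have comb_f v : lcomb v f = lcomb (v *m C) e.
  by rewrite -lcomb_mul; apply: eq_bigr => j _; rewrite -(proj2 (HC j)).
have [A HA] : exists A : 'M_n, forall i, Krow (row i A) /\ e i = lcomb (row i A) f.
  by apply: (@rows_exist n n (fun i v => Krow v /\ e i = lcomb v f)) => i; apply: f_spans.
have AC1 : A *m C = 1%:M.
  apply/row_matrixP => i; rewrite row_mul row1.
  apply: (coord_unique (e_in_L i) (Krow_mul (proj1 (HA i)) KC) (Krow_delta i)).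
    by rewrite -comb_f -(proj2 (HA i)).
  by rewrite lcomb_delta.
have [_ C_unit] := mulmx1_unit AC1.
have lamC0 : lam *m C = 0.
  apply: (coord_unique (sf0 L_sub) (Krow_mul Klam KC) _ _ (esym (lcomb0 _))).
    by move=> k; rewrite mxE; apply: sf0.
  by rewrite -comb_f flam0.
by rewrite -(mulmxK C_unit lam) lamC0 mul0mx.
Qed.
End Basis.

Lemma ext_degree_spanning_free (f : 'I_n -> F) : ext_degree K L n ->
  (forall j, L (f j)) -> (forall x, L x -> exists mu, Krow mu /\ x = lcomb mu f) ->
  forall lam, Krow lam -> lcomb lam f = 0 -> lam = 0.
Proof. by move=> [_ [e [e_in_L e_basis]]]; apply: spanning_free. Qed.
End SpanningFamily.

Section Pfister.
Variables (F : fieldType) (F2 : (2 \in [pchar F])%N).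

Lemma Fsq_subfield : is_subfield (@Fsq F).
Proof.
split.
- by exists 0; rewrite expr0n.
- by exists 1; rewrite expr1n.
- by move=> _ _ [x ->] [y ->]; exists (x - y); char2_ring F2.
- by move=> _ _ [x ->] [y ->]; exists (x * y); rewrite exprMn.
- by move=> _ [x ->] _; exists x^-1; rewrite exprVn.
Qed.

Variables a b : F.

Definition pf_coef (j : 'I_4) : F := [:: 1; a; b; a * b]`_j.
Definition pf (t : 'rV[F]_4) : F := \sum_j t 0 j ^+ 2 * pf_coef j.

Lemma pfE t :
  pf t = t 0 o0 ^+ 2 + a * t 0 o1 ^+ 2 + b * t 0 o2 ^+ 2 + a * b * t 0 o3 ^+ 2.
Proof. by rewrite /pf sum4 /pf_coef /=; ring. Qed.

Lemma pf_mkrow x0 x1 x2 x3 :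
  pf (mkrow x0 x1 x2 x3) = x0 ^+ 2 + a * x1 ^+ 2 + b * x2 ^+ 2 + a * b * x3 ^+ 2.
Proof. by rewrite pfE !mxE. Qed.

Lemma pf_lcomb t : pf t = lcomb (map_mx (fun x => x ^+ 2) t) pf_coef.
Proof. by apply: eq_bigr => j _; rewrite mxE. Qed.

Lemma pf_delta j : pf (delta_mx 0 j) = pf_coef j.
Proof.
rewrite pf_lcomb -[RHS](lcomb_delta pf_coef j); congr lcomb.
by apply/rowP => k; rewrite !mxE; case: (_ && _); rewrite ?expr1n ?expr0n.
Qed.

Lemma pf_scale k t : pf (k *: t) = k ^+ 2 * pf t.
Proof. by rewrite !pfE !mxE; ring. Qed.

Lemma pfB t s : pf (t - s) = pf t - pf s.
Proof. by rewrite !pfE !mxE; char2_ring F2. Qed.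

(* The multiplication matrix of t: the composition law of the Pfister form. *)
Definition pf_mul (t : 'rV[F]_4) : 'M[F]_4 :=
  let: (t0, t1, t2, t3) := (t 0 o0, t 0 o1, t 0 o2, t 0 o3) in
  mkmx [:: [:: t0; t1; t2; t3]; [:: a * t1; t0; a * t3; t2];
           [:: b * t2; b * t3; t0; t1]; [:: a * b * t3; b * t2; a * t1; t0]].

Lemma pf_mulP t s : pf (s *m pf_mul t) = pf t * pf s.
Proof. by rewrite !pfE !mulmx4E !mxE /=; char2_ring F2. Qed.

Definition pf_value (x : F) : Prop := exists t, x = pf t.

Lemma pf_value_subfield : is_subfield pf_value.
Proof.
split.
- by exists 0; rewrite pfE !mxE; ring.
- by exists (mkrow 1 0 0 0); rewrite pf_mkrow; ring.
- by move=> _ _ [t ->] [s ->]; exists (t - s); rewrite pfB.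
- by move=> _ _ [t ->] [s ->]; exists (s *m pf_mul t); rewrite pf_mulP.
- move=> _ [t ->] pf_t0; exists ((pf t)^-1 *: t).
  by rewrite pf_scale expr2 -mulrA mulVf ?mulr1.
Qed.

Lemma Fsq_adj2E x : Fsq_adj2 a b x <-> pf_value x.
Proof.
apply: (gen_fieldE pf_value_subfield) => [y [[z ->] | -> | ->] | _ [t ->]].
- by exists (mkrow z 0 0 0); rewrite pf_mkrow; ring.
- by exists (mkrow 0 1 0 0); rewrite pf_mkrow; ring.
- by exists (mkrow 0 0 1 0); rewrite pf_mkrow; ring.
have G : is_subfield (Fsq_adj2 a b) := gen_field_subfield _.
have sq z : Fsq_adj2 a b (z ^+ 2) by apply: gen_field_incl; apply: Or31; exists z.
have Ga : Fsq_adj2 a b a by apply: gen_field_incl; apply: Or32.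
have Gb : Fsq_adj2 a b b by apply: gen_field_incl; apply: Or33.
rewrite pfE; apply: (sfD G (sfD G (sfD G (sq _) (sfM G Ga (sq _))) (sfM G Gb (sq _)))).
exact: (sfM G (sfM G Ga Gb) (sq _)).
Qed.

Section Anisotropy.
Hypothesis deg4 : ext_degree (@Fsq F) (Fsq_adj2 a b) 4.

(* Since 1, a, b, ab span the 4-dimensional F^2-space F^2(a, b), they are free
   over F^2: the Pfister form is anisotropic. *)
Lemma pf_anisotropic t : pf t = 0 -> t = 0.
Proof.
move=> pf_t0; pose sq (u : 'rV[F]_4) := map_mx (fun x => x ^+ 2) u.
have sq_Fsq u : Krow (@Fsq F) (sq u) by move=> j; rewrite mxE; exists (u 0 j).
have sq_t0 : sq t = 0.
  apply: (ext_degree_spanning_free Fsq_subfield (gen_field_subfield _) deg4) => //.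
  - by move=> j; apply/Fsq_adj2E; exists (delta_mx 0 j); rewrite pf_delta.
  - by move=> x /Fsq_adj2E [s ->]; exists (sq s); rewrite -pf_lcomb.
  - by rewrite -pf_lcomb.
apply/rowP => j; move/rowP/(_ j): sq_t0; rewrite !mxE => /eqP.
by rewrite expf_eq0 => /andP [_ /eqP].
Qed.

Lemma pf_inj t s : pf t = pf s -> t = s.
Proof. by move=> /eqP; rewrite -subr_eq0 -pfB => /eqP /pf_anisotropic /subr0_eq. Qed.
End Anisotropy.
End Pfister.

(* F^2(a) = F^2(a, 0) is the set of values of <<a, 0>>, i.e. of u^2 + a v^2. *)
Lemma Fsq_adj1E (F : fieldType) (F2 : (2 \in [pchar F])%N) (a x : F) :
  Fsq_adj1 a x <-> pf_value a 0 x.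
Proof.
rewrite -(Fsq_adj2E F2); apply: gen_field_ext => y.
split=> [[Sy | ->] | [Sy | -> | ->]]; [exact: Or31 | exact: Or32 | by left | by right |].
by left; exists 0; rewrite expr0n.
Qed.

Section SimilarityGenerics.
Variables (F : fieldType) (n : nat).

Lemma bformZ (B : 'M[F]_n) c x y : bform (c *: B) x y = c * bform B x y.
Proof. by rewrite /bform -scalemxAr -scalemxAl mxE. Qed.

Lemma G_bform_qform (B : 'M[F]_n) c : G_bform B c -> G_qform (q_of B) c.
Proof.
by case=> c0 [M [Mu HM]]; split=> //; exists M; split=> // x; rewrite /q_of -HM bformZ.
Qed.

Lemma sim_unit (B : 'M[F]_n) c (M : 'M[F]_n) : bform_anisotropic B -> c != 0 ->
  (forall x, c * q_of B x = q_of B (x *m M)) -> M \in unitmx.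
Proof.
move=> aniso c0 HM; rewrite -row_free_unit; apply: inj_row_free => v vM0.
apply/eqP; apply: contraT => v0; have := aniso v v0.
have : c * q_of B v = 0 by rewrite HM vM0 /q_of /bform !mul0mx mxE.
by rewrite /q_of => /eqP; rewrite mulf_eq0 (negbTE c0) /= => /eqP ->; rewrite eqxx.
Qed.
End SimilarityGenerics.

Section Beta.
Variables (F : fieldType) (F2 : (2 \in [pchar F])%N) (a b : F).

Definition beta : 'M[F]_4 :=
  diag_bform (n := 4) [ffun i : 'I_4 => [:: a + 1; a; b; a * b]`_i].

Lemma betaE x y : bform beta x y = (a + 1) * (x 0 o0 * y 0 o0) + a * (x 0 o1 * y 0 o1)
  + b * (x 0 o2 * y 0 o2) + a * b * (x 0 o3 * y 0 o3).
Proof. by rewrite /bform /beta /diag_bform mul_mx_diag !mxE sum4 !mxE !ffunE /=; ring. Qed.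

Definition Phi : 'M[F]_4 :=
  mkmx [:: [:: 1; 1; 0; 0]; [:: 0; 1; 0; 0]; [:: 0; 0; 1; 0]; [:: 0; 0; 0; 1]].

Lemma Phi_invol : Phi *m Phi = 1%:M.
Proof.
apply/matrixP => i j; rewrite !mxE sum4 !mxE.
by case: (ord4P i) => ->; case: (ord4P j) => ->; rewrite /=; char2_ring F2.
Qed.

Lemma q_beta_pf x : q_of beta x = pf a b (x *m Phi).
Proof. by rewrite /q_of betaE pfE !mulmx4E !mxE /=; char2_ring F2. Qed.

Lemma q_beta_value x : pf_value a b (q_of beta x).
Proof. by exists (x *m Phi); apply: q_beta_pf. Qed.

Definition sim (t : 'rV[F]_4) : 'M[F]_4 := Phi *m pf_mul a b t *m Phi.

Lemma sim_qsim t x : q_of beta (x *m sim t) = pf a b t * q_of beta x.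
Proof.
by rewrite !q_beta_pf /sim !mulmxA -(mulmxA _ Phi Phi) Phi_invol mulmx1 pf_mulP.
Qed.

Lemma simE t : sim t =
  let: (t0, t1, t2, t3) := (t 0 o0, t 0 o1, t 0 o2, t 0 o3) in
  mkmx [:: [:: t0 + a * t1; t1 + a * t1; t2 + a * t3; t2 + t3];
           [:: a * t1; t0 + a * t1; a * t3; t2];
           [:: b * t2; b * t2 + b * t3; t0; t1];
           [:: a * b * t3; b * t2 + a * b * t3; a * t1; t0]].
Proof.
apply/matrixP => i j; rewrite /sim !mxE !sum4 !mxE !sum4 !mxE.
by case: (ord4P i) => ->; case: (ord4P j) => ->; rewrite /=; char2_ring F2.
Qed.

Lemma sim_bsim (t x y : 'rV[F]_4) : t 0 o2 = 0 -> t 0 o3 = 0 ->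
  bform beta (x *m sim t) (y *m sim t) = pf a b t * bform beta x y.
Proof.
move=> t2 t3; rewrite simE !betaE !mulmx4E !mxE /= pfE t2 t3.
char2_ring F2.
Qed.

Lemma sim_e2e3 t : bform beta (mkrow 0 0 1 0 *m sim t) (mkrow 0 0 0 1 *m sim t)
  = a * b ^+ 2 * (t 0 o2 ^+ 2 + a * t 0 o3 ^+ 2).
Proof. by rewrite simE !betaE !mulmx4E !mxE /=; char2_ring F2. Qed.
End Beta.

Section Degree4.
Variables (F : fieldType) (F2 : (2 \in [pchar F])%N) (a b : F).
Hypothesis deg4 : ext_degree (@Fsq F) (Fsq_adj2 a b) 4.

(* 1, a, b, ab are nonzero, being the values of pf at the unit vectors. *)
Lemma pf_coef_neq0 j : pf_coef a b j != 0.
Proof.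
rewrite -pf_delta; apply: contraTneq isT => /(pf_anisotropic F2 deg4) /matrixP /(_ 0 j).
by rewrite !mxE !eqxx => /eqP; rewrite oner_eq0.
Qed.

Lemma a_neq0 : a != 0. Proof. exact: (pf_coef_neq0 o1). Qed.
Lemma b_neq0 : b != 0. Proof. exact: (pf_coef_neq0 o2). Qed.

Lemma beta_anisotropic : bform_anisotropic (beta a b).
Proof.
move=> x; apply: contra => /eqP qx0.
have xPhi0 : x *m Phi F = 0.
  by apply: (pf_anisotropic F2 deg4); rewrite -(q_beta_pf F2).
by rewrite -[x]mulmx1 -(Phi_invol F2) mulmxA xPhi0 mul0mx.
Qed.

(* As pf is injective, the only similarity of q_beta with factor pf t is sim t. *)
Lemma qsim_is_sim t (M : 'M[F]_4) :
  (forall x, pf a b t * q_of (beta a b) x = q_of (beta a b) (x *m M)) -> M = sim a b t.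
Proof.
move=> HM; have MPhi : M *m Phi F = Phi F *m pf_mul a b t.
  apply/row_matrixP => i; rewrite !row_mul rowE [row i _]rowE.
  by apply: (pf_inj F2 deg4); rewrite -(q_beta_pf F2) -HM (q_beta_pf F2) pf_mulP.
by rewrite -[M]mulmx1 -(Phi_invol F2) mulmxA MPhi.
Qed.

(* A similarity of beta itself with factor pf t is sim t, which must keep e2 and e3
   orthogonal; by [sim_e2e3] this forces t2 = t3 = 0. *)
Lemma bsim_factor t (M : 'M[F]_4) :
  (forall x y, pf a b t * bform (beta a b) x y = bform (beta a b) (x *m M) (y *m M)) ->
  t 0 o2 = 0 /\ t 0 o3 = 0.
Proof.
move=> HM; have M_sim : M = sim a b t by apply: qsim_is_sim => x; apply: HM.
have e2e3 : bform (beta a b) (mkrow 0 0 1 0) (mkrow 0 0 0 1) = 0.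
  by rewrite betaE !mxE /=; ring.
have : a * b ^+ 2 * (t 0 o2 ^+ 2 + a * t 0 o3 ^+ 2) = 0.
  by rewrite -(sim_e2e3 F2) -M_sim -HM e2e3 mulr0.
move/eqP; rewrite !mulf_eq0 (negbTE a_neq0) (negbTE b_neq0) /= => /eqP t23.
have /mkrow_eq0 [t2 t3 _ _] : mkrow (t 0 o2) (t 0 o3) 0 0 = 0.
  by apply: (pf_anisotropic F2 deg4); rewrite pf_mkrow -[RHS]t23; ring.
by [].
Qed.

Lemma G_qform_beta c : G_qform (q_of (beta a b)) c <-> c != 0 /\ Fsq_adj2 a b c.
Proof.
split=> [[c0 [M [_ HM]]] | [c0 /(Fsq_adj2E F2) [t ct]]].
  split=> //; apply/(Fsq_adj2E F2).
  have q0 : q_of (beta a b) (mkrow 1 0 0 0) != 0.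
    by apply: beta_anisotropic; apply/eqP => /mkrow_eq0 [/eqP]; rewrite oner_eq0.
  have V : is_subfield (pf_value a b) := pf_value_subfield F2 a b.
  rewrite -[c](mulfK q0) HM.
  exact: (sfM V (q_beta_value F2 a b _) (sfV V (q_beta_value F2 a b _) q0)).
subst c; split=> //; exists (sim a b t); split=> [ | x]; last by rewrite /= (sim_qsim F2).
by apply: (sim_unit beta_anisotropic c0) => x; rewrite (sim_qsim F2).
Qed.

Lemma G_bform_beta c : G_bform (beta a b) c <-> c != 0 /\ Fsq_adj1 a c.
Proof.
split=> [Gc | [c0 /(Fsq_adj1E F2) [t ct]]].
  have [c0 [M [_ HM]]] := Gc; split=> //.
  have [_ /(Fsq_adj2E F2) [t ct]] := (G_qform_beta c).1 (G_bform_qform Gc).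
  have [t2 t3] : t 0 o2 = 0 /\ t 0 o3 = 0.
    by apply: (bsim_factor (M := M)) => x y; rewrite -ct -bformZ HM.
  by apply/(Fsq_adj1E F2); exists t; rewrite ct !pfE t2 t3; ring.
pose t' := mkrow (t 0 o0) (t 0 o1) 0 0.
have ct' : c = pf a b t' by rewrite ct pfE pf_mkrow; ring.
split=> //; exists (sim a b t'); split=> [ | x y].
  by apply: (sim_unit beta_anisotropic c0) => x; rewrite (sim_qsim F2) ct'.
by rewrite bformZ (sim_bsim F2) ?ct' // mxE.
Qed.

(* b is not in F^2(a): otherwise b = u^2 + a v^2 would make pf vanish at (u, v, 1, 0). *)
Lemma b_notin_Fsq_adj1 : ~ Fsq_adj1 a b.
Proof.
move=> /(Fsq_adj1E F2) [s bs].
have /mkrow_eq0 [_ _ /eqP] : mkrow (s 0 o0) (s 0 o1) 1 0 = 0.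
  apply: (pf_anisotropic F2 deg4).
  have -> : pf a b (mkrow (s 0 o0) (s 0 o1) 1 0) = pf a 0 s + b.
    by rewrite pf_mkrow pfE; ring.
  by rewrite -bs (addrr_pchar2 F2).
by rewrite oner_eq0.
Qed.
End Degree4.

Unset Implicit Arguments.

Theorem mainTheorem3 (F : fieldType) (a b : F) :
  (2 \in [pchar F])%N ->
  ext_degree (@Fsq F) (Fsq_adj2 a b) 4 ->
  let beta := diag_bform (n := 4) [ffun i : 'I_4 => [:: a + 1; a; b; a * b]`_i] in
  [/\ bform_anisotropic beta,
      (forall c, G_qform (q_of beta) c <-> (c != 0 /\ Fsq_adj2 a b c)),
      (forall c, G_bform beta c <-> (c != 0 /\ Fsq_adj1 a c)) &
      ((forall c, G_bform beta c -> G_qform (q_of beta) c) /\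
       exists c, G_qform (q_of beta) c /\ ~ G_bform beta c)].
Proof.
move=> F2 deg4 beta.
split; [exact: beta_anisotropic | exact: G_qform_beta | exact: G_bform_beta | ].
split=> [c | ]; first exact: G_bform_qform.
exists b; split; last by move=> /(G_bform_beta F2 deg4) [_ /(b_notin_Fsq_adj1 F2 deg4)].
apply/(G_qform_beta F2 deg4); split; first exact: (b_neq0 F2 deg4).
by apply/(Fsq_adj2E F2); exists (mkrow 0 0 1 0); rewrite pf_mkrow; ring.
Qed.
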